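(* Let $\mathcal{RR}_2$ be the set of partitions in which consecutive parts differ by at least $2$ and all parts are greater than $1$ (including the empty partition). For a nonempty partition $\pi=(\lambda_1,\dots,\lambda_\nu)$ let $\omega_{2,2}(\pi)=(\lambda_\nu-1)\prod_{i=1}^{\nu-1}(\lambda_i-\lambda_{i+1}-1)$, and let $\omega_{2,2}$ of the empty partition be $1$. Then, as formal power series, \[\sum_{\pi\in\mathcal{RR}_2}\omega_{2,2}(\pi)\,q^{|\pi|}=\sum_{\pi\in\tilde C_{\ge 0}}q^{|\pi|},\] where $\tilde C_{\ge0}$ is the set of all partitions with crank $\ge 0$.
   Context: A partition is a finite weakly decreasing sequence of positive integers; $|\pi|$ is the sum of its parts. The crank of a partition $\pi$ is defined as: the largest part of $\pi$ if $1$ is not a part of $\pi$ (the empty partition has crank $0$); otherwise, (the number of parts of $\pi$ larger than the number of $1$'s in $\pi$) minus (the number of $1$'s in $\pi$). *)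

From mathcomp Require Import all_boot all_order all_algebra ssrint.
Set Implicit Arguments. Unset Strict Implicit. Unset Printing Implicit Defensive.
Import GRing.Theory Num.Theory.

Definition is_partition (s : seq nat) : bool :=
  sorted (fun a b => b <= a) s && all (fun x => 0 < x) s.

Definition psize (s : seq nat) : nat := sumn s.

Definition ones (s : seq nat) : nat := count (fun x => x == 1) s.

(* crank, as in the paper; for a partition the head is the largest part,
   and head 0 [::] = 0 gives crank 0 for the empty partition *)
Definition crank (s : seq nat) : int :=
  if ones s == 0 then Posz (head 0 s)
  else (Posz (count (fun x => (ones s < x)%N) s) - Posz (ones s))%R.

Definition RR2 (s : seq nat) : bool :=
  sorted (fun a b => b + 2 <= a) s && all (fun x => 1 < x) s.

(* omega_{2,2}; on RR_2 all factors are >= 1, so truncated nat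
   subtraction agrees with the integer formula *)
Fixpoint omega22 (s : seq nat) : nat :=
  match s with
  | [::] => 1
  | [:: x] => x - 1
  | x :: ((y :: _) as t) => (x - y - 1) * omega22 t
  end.

(* Let d be the largest index with lambda_d > d.  The parts after the first d
   are at most d + 1, and the crank is nonnegative exactly when there are at
   most d ones.  Breaking every part d + 1 into d + 1 ones, and conversely
   grouping the ones into parts d + 1 by Euclidean division, is a
   size-preserving bijection between partitions of nonnegative crank and
   partitions with lambda_i <> i for all i.
   Deleting the first row and column of such a partition, whose corner hook has
   length h, leaves a partition m of the same kind, from which the original is
   recovered by choosing the first part in h - hook m - 1 ways.  Deleting the
   largest part h of a partition in RR_2 multiplies omega_{2,2} by
   h - lambda_2 - 1.  So the count of partitions with lambda_i <> i graded by
   hook length and the omega_{2,2}-weighted count of RR_2 graded by largest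
   part obey the same recursion, hence agree. *)

From mathcomp Require Import all_boot all_order all_algebra ssrint.
From mathcomp Require Import zify.
Import Num.Theory.
Set Implicit Arguments. Unset Strict Implicit. Unset Printing Implicit Defensive.

Section BigSeq.
Variables (R : Type) (idx : R) (op : Monoid.com_law idx).

Lemma big_bij_seq (I J : eqType) (r : seq I) (s : seq J) (P : pred I) (Q : pred J)
    (F : I -> R) (G : J -> R) (f : I -> J) (g : J -> I) :
    uniq r -> uniq s ->
    {in r, forall i, P i -> [/\ f i \in s, Q (f i), g (f i) = i & F i = G (f i)]} ->
    {in s, forall j, Q j -> [/\ g j \in r, P (g j) & f (g j) = j]} ->
  \big[op/idx]_(i <- r | P i) F i = \big[op/idx]_(j <- s | Q j) G j.
Proof.
move=> ur us fP gQ; rewrite -big_filter -[RHS]big_filter.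
rewrite (eq_big_seq (G \o f)); last first.
  by move=> i; rewrite mem_filter => /andP[Pi ri]; have [_ _ _ ->] := fP i ri Pi.
rewrite -(big_map f predT G); apply/perm_big/uniq_perm; last 1 first.
- move=> j; rewrite mem_filter; apply/mapP/andP => [[i]|[Qj sj]].
    by rewrite mem_filter => /andP[Pi ri] ->; have [] := fP i ri Pi.
  by have [rg Pg fg] := gQ j sj Qj; exists (g j); rewrite ?mem_filter ?Pg.
- rewrite map_inj_in_uniq ?filter_uniq // => i i'; rewrite !mem_filter.
  move=> /andP[Pi ri] /andP[Pi' ri'] eqf.
  by have [_ _ <- _] := fP i ri Pi; rewrite eqf; have [_ _ -> _] := fP i' ri' Pi'.
- exact: filter_uniq.
Qed.

Lemma big_fibers (I : eqType) (r : seq I) (P : pred I) (F : I -> R) (f : I -> nat) N :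
    {in r, forall i, P i -> f i < N} ->
  \big[op/idx]_(i <- r | P i) F i =
  \big[op/idx]_(k < N) \big[op/idx]_(i <- r | P i && (f i == k)) F i.
Proof.
move=> fN; under [RHS]eq_bigr do rewrite big_mkcondr.
rewrite (exchange_big_dep P) //= big_seq_cond [RHS]big_seq_cond.
apply: eq_bigr => i /andP[ri Pi].
rewrite (bigD1 (Ordinal (fN i ri Pi))) //= eqxx big1 ?Monoid.mulm1 // => k.
by case/andP=> _ nk; case: eqP => // fk; move: nk; rewrite -val_eqE /= fk eqxx.
Qed.

End BigSeq.

Arguments big_bij_seq {R idx op I J r s P Q F G} f g.
Arguments big_fibers {R idx op I r P F} f N.

Lemma geq_trans : transitive geq.
Proof. exact: rev_trans leq_trans. Qed.

Lemma sorted_geq_cons x s : sorted geq (x :: s) = all (fun y => y <= x) s && sorted geq s.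
Proof. exact: (path_sortedE geq_trans). Qed.

Lemma sorted_geq_cat m a b : sorted geq a -> sorted geq b ->
  all (fun x => m <= x) a -> all (fun y => y <= m) b -> sorted geq (a ++ b).
Proof.
move=> sa sb /allP am /allP bm; rewrite !(sorted_pairwise geq_trans) in sa sb *.
rewrite pairwise_cat sa sb !andbT; apply/allrelP => x y /am xm /bm ym.
exact: leq_trans ym xm.
Qed.

Lemma mem_le_head s x : sorted geq s -> x \in s -> x <= head 0 s.
Proof.
case: s => // y s; rewrite sorted_geq_cons inE => /andP[/allP ys _] /orP[/eqP -> //|].
exact: ys.
Qed.

Lemma sorted_nseq n x : sorted geq (nseq n x).
Proof. by elim: n => // -[|n] //= ->; rewrite andbT. Qed.

Lemma is_partitionE s : is_partition s = sorted geq s && all (fun x => 0 < x) s.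
Proof. by []. Qed.

Lemma is_partition_cons x t :
  is_partition (x :: t) = [&& all (fun y => y <= x) t, is_partition t & 0 < x].
Proof. by rewrite !is_partitionE sorted_geq_cons /= -!andbA (andbC (0 < x)). Qed.

Lemma size_le_sumn s : all (fun x => 0 < x) s -> size s <= sumn s.
Proof. by elim: s => //= x s IH /andP[x0 /IH]; lia. Qed.

Lemma mem_le_sumn s x : x \in s -> x <= sumn s.
Proof. by elim: s => //= y s IH; rewrite inE => /orP[/eqP ->|/IH]; lia. Qed.

Lemma head_le_sumn s : head 0 s <= sumn s.
Proof. by case: s => //= x s; rewrite leq_addr. Qed.

Fixpoint bounded_seqs k B : seq (seq nat) :=
  if k is k'.+1 then [::] :: [seq x :: s | x <- iota 0 B.+1, s <- bounded_seqs k' B]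
  else [:: [::]].

Lemma mem_bounded_seqs k B s :
  (s \in bounded_seqs k B) = (size s <= k) && all (fun x => x <= B) s.
Proof.
elim: k s => [|k IH] [|x s] //; rewrite in_cons orFb [RHS]/= ltnS.
apply/allpairsP/idP => [[[y t] [+ + [-> ->]]]|/andP[st /andP[xB sB]]].
  by rewrite mem_iota IH /= ltnS => -> /andP[-> ->].
by exists (x, s); rewrite mem_iota ltnS IH st xB sB.
Qed.

Lemma bounded_seqs_uniq k B : uniq (bounded_seqs k B).
Proof.
elim: k => // k IH; rewrite cons_uniq; apply/andP; split.
  by apply/negP => /allpairsP[[x t] []].
by apply: allpairs_uniq => [||[x s] [y t] _ _ /= [-> ->]] //; exact: iota_uniq.
Qed.

Definition partitions n :=
  [seq s <- bounded_seqs n n | is_partition s && (psize s == n)].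

Lemma mem_partitions n s : (s \in partitions n) = is_partition s && (psize s == n).
Proof.
rewrite mem_filter mem_bounded_seqs andb_idr // => /andP[/andP[_ s0] /eqP <-].
by rewrite size_le_sumn //=; apply/allP => x /mem_le_sumn.
Qed.

Lemma partitions_uniq n : uniq (partitions n).
Proof. exact/filter_uniq/bounded_seqs_uniq. Qed.

Lemma partitions0 : partitions 0 = [:: [::]].
Proof. by []. Qed.

(** * Nonnegative crank versus parts different from their index *)

Fixpoint fixpoint_free_from k s :=
  if s is x :: t then (x != k) && fixpoint_free_from k.+1 t else true.

Definition fixpoint_free s := fixpoint_free_from 1 s.

Lemma fixpoint_free_from_cat k a b :
  fixpoint_free_from k (a ++ b) =
  fixpoint_free_from k a && fixpoint_free_from (k + size a) b.
Proof. by elim: a k => [|x a IH] k /=; rewrite ?addn0 // IH addSnnS andbA. Qed.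

Lemma fixpoint_free_from_large k a :
  all (fun x => k + size a <= x) a -> fixpoint_free_from k a.
Proof.
elim: a k => //= x a IH k /andP[xk ak]; rewrite IH ?andbT; first by apply/eqP; lia.
by apply: sub_all ak => y /=; rewrite addSnnS.
Qed.

Lemma fixpoint_free_from_small k b : all (fun x => x < k) b -> fixpoint_free_from k b.
Proof.
elim: b k => //= x b IH k /andP[xk bk]; rewrite IH ?andbT; first by apply/eqP; lia.
by apply: sub_all bk => y /= /ltnW.
Qed.

Lemma fixpoint_free_from_map_succ k m :
  fixpoint_free_from k.+1 (map succn m) = fixpoint_free_from k m.
Proof. by elim: m k => //= x m IH k; rewrite eqSS IH. Qed.

Fixpoint durfee_from k s :=
  if s is x :: t then if k < x then (durfee_from k.+1 t).+1 else 0 else 0.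

(* The largest d with s_i > i for all i <= d: for a partition, the Young
   diagram contains a d x (d + 1) rectangle. *)
Definition durfee s := durfee_from 1 s.

Lemma durfee_from_cat k a b :
  all (fun x => k + size a <= x) a -> head 0 b <= k + size a ->
  durfee_from k (a ++ b) = size a.
Proof.
elim: a k => [|x a IH] k /=; first by case: b => //= y b _; rewrite addn0 ltnNge => ->.
move=> /andP[xk ak] bk; rewrite ifT; last by lia.
by rewrite IH ?addSnnS.
Qed.

Lemma durfee_from_spec k s : sorted geq s ->
  [/\ durfee_from k s <= size s,
      all (fun x => k + durfee_from k s <= x) (take (durfee_from k s) s)
    & head 0 (drop (durfee_from k s) s) <= k + durfee_from k s].
Proof.
elim: s k => [|x t IH] k //; rewrite sorted_geq_cons /= => /andP[xt st].
case: ifP => [kx|/negbT]; last by rewrite -leqNgt addn0.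
have [dt tk tail] := IH k.+1 st; rewrite !addnS -!addSn; split=> //=.
rewrite tk andbT; move: tk; case E: (durfee_from k.+1 t) => [|d]; first by lia.
case: t xt E {IH st dt tail} => // y t /= /andP[yx _] _ /andP[ky _].
exact: leq_trans yx.
Qed.

Definition middle c b := [seq x <- b | 1 < x < c].

Definition assemble a q mid r := a ++ nseq q (size a).+1 ++ mid ++ nseq r 1.

Definition admissible a mid := [&& 0 < size a, sorted geq a,
  all (fun x => size a < x) a, sorted geq mid & all (fun x => 1 < x <= size a) mid].

Definition break_rows s :=
  let d := durfee s in let b := drop d s in
  assemble (take d s) 0 (middle d.+1 b) (ones b + d.+1 * count_mem d.+1 b).

Definition stack_ones s :=
  let d := durfee s in let b := drop d s in
  assemble (take d s) (count_mem d.+1 b + ones b %/ d.+1) (middle d.+1 b) (ones b %% d.+1).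

Lemma sumn_assemble a q mid r :
  sumn (assemble a q mid r) = sumn a + q * (size a).+1 + sumn mid + r.
Proof. by rewrite !sumn_cat !sumn_nseq mul1n mulnC !addnA. Qed.

Lemma sorted_split_extremes c b : 1 < c -> sorted geq b -> all (fun x => 0 < x <= c) b ->
  b = nseq (count_mem c b) c ++ middle c b ++ nseq (ones b) 1.
Proof.
move=> c1; elim: b => // x t IH; rewrite sorted_geq_cons /= => /andP[xt st] /andP[/andP[x0 xc] tc].
rewrite {1}IH //; case: (ltngtP x c) xc => [xc _|//|->]; last first.
  by move=> _; rewrite andbF (gtn_eqF c1).
have tcx : c \notin t by apply/negP => /(allP xt) /=; lia.
rewrite (count_memPn tcx) andbT; case: (ltngtP 1 x) x0 xt => [//|//|<- _ xt].
rewrite /middle (@eq_in_filter _ _ pred0) ?filter_pred0 // => y /(allP xt) /= y1.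
by rewrite ltnNge y1.
Qed.

Lemma crank_ge0_cat a b :
  all (fun x => size a < x) a -> all (fun x => x <= (size a).+1) b ->
  (0 <= crank (a ++ b))%R = (ones b <= size a).
Proof.
move=> ha hb; rewrite /crank; have ones_a : ones a = 0.
  rewrite /ones (eq_in_count (a2 := pred0)) ?count_pred0 // => x xa /=.
  have := allP ha x xa; case: a xa {ha hb} => //= y a _; lia.
have -> : ones (a ++ b) = ones b by rewrite {1}/ones count_cat -/(ones a) ones_a.
case: eqP => [-> //|_]; rewrite subr_ge0 lez_nat count_cat.
case: (leqP (ones b) (size a)) => ob.
  have /eqP -> : count (fun x => ones b < x) a == size a.
    by rewrite -all_count; apply: sub_all ha => x /=; lia.
  exact: leq_trans ob (leq_addr _ _).
rewrite (eq_in_count (a1 := fun x => ones b < x) (a2 := pred0) (s := b)).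
  by rewrite count_pred0 addn0; apply/negbTE; rewrite -ltnNge (leq_ltn_trans (count_size _ _)).
by move=> x /(allP hb) /=; lia.
Qed.

Section Assemble.
Variables (a mid : seq nat).
Hypothesis adm : admissible a mid.

Let a0 : 0 < size a. Proof. by case/and5P: adm. Qed.
Let sa : sorted geq a. Proof. by case/and5P: adm. Qed.
Let ha : all (fun x => size a < x) a. Proof. by case/and5P: adm. Qed.
Let smid : sorted geq mid. Proof. by case/and5P: adm. Qed.
Let hmid : all (fun x => 1 < x <= size a) mid. Proof. by case/and5P: adm. Qed.

Lemma assemble_partition q r : is_partition (assemble a q mid r).
Proof.
have mid_gt1 : all (fun x => 1 <= x) mid by apply: sub_all hmid => x /andP[/ltnW].
have mid_le : all (fun x => x <= (size a).+1) mid by apply: sub_all hmid => x /andP[_ /leqW].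
rewrite is_partitionE /assemble; apply/andP; split; last first.
  by rewrite !all_cat !all_nseq !orbT (sub_all _ ha) ?(sub_all _ mid_gt1) // => x /=; lia.
have s_rest : sorted geq (mid ++ nseq r 1).
  by apply: (sorted_geq_cat (m := 1)); rewrite ?sorted_nseq ?all_nseq ?orbT.
have s_tail : sorted geq (nseq q (size a).+1 ++ mid ++ nseq r 1).
  apply: (sorted_geq_cat (m := (size a).+1)); rewrite ?sorted_nseq ?all_nseq ?leqnn ?orbT //.
  by rewrite all_cat mid_le all_nseq orbT.
apply: (sorted_geq_cat (m := (size a).+1)) => //.
by rewrite !all_cat mid_le !all_nseq ltnSn !orbT.
Qed.

Let c_neq1 : ((size a).+1 == 1) = false.
Proof. by rewrite eqSS; apply/negbTE; rewrite -lt0n. Qed.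

Let tail q r := nseq q (size a).+1 ++ mid ++ nseq r 1.

Let mid_in : forall x, x \in mid -> 1 < x <= size a.
Proof. exact/allP. Qed.

Let tail_le q r : all (fun x => x <= (size a).+1) (tail q r).
Proof.
rewrite !all_cat !all_nseq leqnn !orbT andbT /=.
by apply/allP => x /mid_in /andP[_ /leqW].
Qed.

Let count_tail q r : count_mem (size a).+1 (tail q r) = q.
Proof.
have c_mid : (size a).+1 \notin mid.
  by apply/negP => /mid_in /andP[_]; rewrite ltnn.
by rewrite !count_cat !count_nseq /= eqxx (count_memPn c_mid) (eq_sym 1) c_neq1 mul1n addn0.
Qed.

Let ones_tail q r : ones (tail q r) = r.
Proof.
rewrite /ones !count_cat !count_nseq /= c_neq1 (eq_in_count (a2 := pred0)) ?count_pred0 ?mul1n //.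
by move=> x /mid_in /andP[/gtn_eqF ->].
Qed.

Let middle_tail q r : middle (size a).+1 (tail q r) = mid.
Proof.
rewrite /middle !filter_cat !filter_nseq ltnn andbF ltnn /= cats0.
by apply/all_filterP/allP => x /mid_in.
Qed.

Lemma durfee_assemble q r : durfee (assemble a q mid r) = size a.
Proof.
rewrite /durfee durfee_from_cat // add1n.
by move: (tail_le q r); rewrite /tail; case: (nseq _ _ ++ _) => //= x t /andP[].
Qed.

Lemma break_rows_assemble q r :
  break_rows (assemble a q mid r) = assemble a 0 mid (r + (size a).+1 * q).
Proof.
rewrite /break_rows durfee_assemble take_size_cat // drop_size_cat //.
by rewrite count_tail ones_tail middle_tail.
Qed.

Lemma stack_ones_assemble q r :
  stack_ones (assemble a q mid r) =
  assemble a (q + r %/ (size a).+1) mid (r %% (size a).+1).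
Proof.
rewrite /stack_ones durfee_assemble take_size_cat // drop_size_cat //.
by rewrite count_tail ones_tail middle_tail.
Qed.

Lemma crank_assemble q r : (0 <= crank (assemble a q mid r))%R = (r <= size a).
Proof. by rewrite (crank_ge0_cat ha (tail_le q r)) ones_tail. Qed.

Lemma fixpoint_free_assemble q r : fixpoint_free (assemble a q mid r) = (q == 0).
Proof.
rewrite /fixpoint_free fixpoint_free_from_cat fixpoint_free_from_large; last first.
  by apply: sub_all ha => x; rewrite add1n.
rewrite add1n; case: q => [|q] /=; last by rewrite eqxx.
apply: fixpoint_free_from_small; rewrite all_cat all_nseq ltnS a0 orbT andbT.
by apply/allP => x /mid_in /andP[_].
Qed.

End Assemble.

Lemma assemble_durfee s : is_partition s -> 0 < durfee s ->
  exists a mid q r, admissible a mid /\ s = assemble a q mid r.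
Proof.
rewrite is_partitionE /durfee => /andP[ss s0].
have [dle take_gt drop_le] := durfee_from_spec 1 ss.
set d := durfee_from 1 s in dle take_gt drop_le * => d0.
have size_a : size (take d s) = d by rewrite size_takel.
set b := drop d s in drop_le *.
have sb : sorted geq b by exact: drop_sorted.
have b_le : all (fun x => 0 < x <= d.+1) b.
  apply/allP => x xb; rewrite (leq_trans (mem_le_head sb xb)) // andbT.
  by apply: (allP s0); rewrite -(cat_take_drop d s) mem_cat xb orbT.
exists (take d s), (middle d.+1 b), (count_mem d.+1 b), (ones b); split.
  rewrite /admissible size_a d0 take_sorted //=.
  rewrite (sorted_filter geq_trans) // (sub_all _ take_gt) /=; last by move=> x; rewrite add1n.
  by apply/allP => x; rewrite mem_filter => /andP[/andP[-> /=]].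
by rewrite /assemble size_a -sorted_split_extremes // cat_take_drop.
Qed.

Lemma durfee_eq0 s : is_partition s -> durfee s = 0 -> s = nseq (size s) 1.
Proof.
case: s => // x t; rewrite is_partition_cons /durfee /= => /and3P[xt /andP[_ t0] x0].
case: ltnP => // x1 _; have -> : x = 1 by lia.
congr (_ :: _); apply/all_pred1P/allP => y yt /=.
by have := allP xt y yt; have := allP t0 y yt; lia.
Qed.

Lemma crank_ones n : (0 <= crank (nseq n 1))%R = (n == 0).
Proof.
case: n => // n; rewrite /crank.
have -> : ones (nseq n.+1 1) = n.+1 by rewrite /ones count_nseq eqxx mul1n.
by rewrite count_nseq /= subr_ge0 lez_nat.
Qed.

Lemma fixpoint_free_ones n : fixpoint_free (nseq n 1) = (n == 0).
Proof. by case: n. Qed.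

Lemma break_rows_spec s : is_partition s -> (0 <= crank s)%R ->
  [/\ is_partition (break_rows s), sumn (break_rows s) = sumn s,
      fixpoint_free (break_rows s) & stack_ones (break_rows s) = s].
Proof.
move=> ps; have [/(durfee_eq0 ps) es|d0] := posnP (durfee s).
  by rewrite es crank_ones => /eqP ->.
have [a [mid [q [r [adm ->]]]]] := assemble_durfee ps d0.
rewrite crank_assemble // => ra.
rewrite break_rows_assemble // assemble_partition // fixpoint_free_assemble //.
rewrite stack_ones_assemble // !sumn_assemble [r + _]addnC [_ * q]mulnC divnMDl // modnMDl.
by rewrite divn_small ?modn_small ?ltnS // addn0; split=> //; lia.
Qed.

Lemma stack_ones_spec s : is_partition s -> fixpoint_free s ->
  [/\ is_partition (stack_ones s), sumn (stack_ones s) = sumn s,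
      (0 <= crank (stack_ones s))%R & break_rows (stack_ones s) = s].
Proof.
move=> ps; have [/(durfee_eq0 ps) es|d0] := posnP (durfee s).
  by rewrite es fixpoint_free_ones => /eqP ->.
have [a [mid [q [r [adm ->]]]]] := assemble_durfee ps d0.
rewrite fixpoint_free_assemble // => /eqP ->.
rewrite stack_ones_assemble // assemble_partition // crank_assemble // break_rows_assemble //.
have e : r %% (size a).+1 + (size a).+1 * (r %/ (size a).+1) = r.
  by rewrite addnC mulnC -divn_eq.
rewrite !sumn_assemble -ltnS ltn_mod add0n e; split=> //; rewrite -[in RHS]e; lia.
Qed.

Lemma count_crank_ge0 n :
  count (fun s => 0 <= crank s)%R (partitions n) = count fixpoint_free (partitions n).
Proof.
rewrite -!sum1_count; apply: (big_bij_seq break_rows stack_ones);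
  rewrite ?partitions_uniq // => s; rewrite mem_partitions => /andP[ps /eqP <-].
  by case/break_rows_spec=> // p_s e fpf_s ->; rewrite mem_partitions p_s /psize e eqxx.
by case/stack_ones_spec=> // p_s e c_s ->; rewrite mem_partitions p_s /psize e eqxx.
Qed.

(** * Removing the first hook *)

Definition hook s := (head 0 s + size s).-1.

Definition peel s := [seq x.-1 | x <- behead s & 1 < x].

Definition add_hook x m k := x :: map succn m ++ nseq k 1.

Definition heads h m := iota (maxn 2 (head 0 m).+1) (h - hook m - 1).

Lemma hook_le_sumn s : is_partition s -> hook s <= sumn s.
Proof.
case: s => // x t; rewrite is_partition_cons /hook /= => /and3P[_ /andP[_ t0] _].
by have := size_le_sumn t0; lia.
Qed.

Lemma add_hook_partition x m k :
  is_partition m -> is_partition (add_hook x m k) = (head 0 m < x).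
Proof.
rewrite is_partitionE => /andP[sm m0]; rewrite is_partition_cons is_partitionE.
have -> : sorted geq (map succn m ++ nseq k 1).
  rewrite (sorted_geq_cat (m := 1)) ?sorted_map ?sorted_nseq ?all_nseq ?orbT //.
  by apply/allP => y /mapP[z _ ->].
rewrite !all_cat !all_map !all_nseq /= orbT andbT.
have -> : all (preim succn (fun y => 0 < y)) m by apply/allP.
case: m sm m0 => [_ _|y m]; first by case: k; case: x.
rewrite sorted_geq_cons /= => /andP[my _] _.
apply/idP/idP => [/andP[/andP[/andP[-> _] _] _] //|yx].
rewrite yx (sub_all _ my) => [|z /= zy]; lia.
Qed.

Lemma sumn_add_hook x m k : sumn (add_hook x m k) = x + sumn m + size m + k.
Proof.
rewrite /= sumn_cat sumn_nseq mul1n.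
by elim: m => [|y m IH] /=; lia.
Qed.

Lemma hook_add_hook x m k : hook (add_hook x m k) = x + size m + k.
Proof. by rewrite /hook /= size_cat size_map size_nseq addnS addnA. Qed.

Lemma peel_add_hook x m k : is_partition m -> peel (add_hook x m k) = m.
Proof.
case/andP=> _ m0; rewrite /peel /= filter_cat filter_nseq /= cats0.
rewrite (all_filterP _); first by elim: m {m0} => //= y m ->.
by rewrite all_map; apply: sub_all m0.
Qed.

Lemma fixpoint_free_add_hook x m k :
  fixpoint_free (add_hook x m k) = (x != 1) && fixpoint_free m.
Proof.
rewrite /fixpoint_free /= fixpoint_free_from_cat fixpoint_free_from_map_succ.
by rewrite [fixpoint_free_from _ (nseq _ _)]fixpoint_free_from_small ?andbT // all_nseq orbT.
Qed.

Lemma peel_partition s : is_partition s -> is_partition (peel s).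
Proof.
case: s => // x t; rewrite is_partition_cons => /and3P[_ /andP[st _] _].
rewrite is_partitionE sorted_map all_map; apply/andP; split.
  by apply: sub_sorted (sorted_filter geq_trans _ st) => y z; rewrite /geq /=; lia.
by apply/allP => y; rewrite mem_filter => /andP[/= y1 _]; lia.
Qed.

Lemma add_hook_peel x t :
  is_partition (x :: t) -> add_hook x (peel (x :: t)) (ones t) = x :: t.
Proof.
rewrite is_partition_cons => /and3P[tx /andP[st t0] x0]; congr (_ :: _).
have xt : x.+1 \notin t by apply/negP => /(allP tx); rewrite ltnn.
symmetry; rewrite {1}(sorted_split_extremes (c := x.+1) (b := t)) ?ltnS //; last first.
  by apply/allP => y yt; rewrite (allP t0 y yt) (leqW (allP tx y yt)).
rewrite (count_memPn xt) /middle -map_comp map_id_in => [|y]; last first.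
  by rewrite mem_filter => /andP[/= y1 _]; lia.
rewrite /=; congr (_ ++ _); apply: eq_in_filter => y /(allP tx) /= yx.
by rewrite ltnS yx andbT.
Qed.

Lemma hook_decomposition s : is_partition s -> s != [::] ->
  exists x m k, [/\ is_partition m, head 0 m < x & s = add_hook x m k].
Proof.
case: s => // x t ps _; have pm := peel_partition ps.
exists x, (peel (x :: t)), (ones t); rewrite add_hook_peel //; split=> //.
by rewrite -(add_hook_partition _ (ones t) pm) add_hook_peel.
Qed.

Lemma mem_heads h m x : is_partition m ->
  (x \in heads h m) = [&& 1 < x, head 0 m < x & x + size m <= h].
Proof.
rewrite mem_iota /hook; case: m => [|y m] /=; first by move=> _; apply/idP/idP; lia.
by rewrite is_partition_cons => /and3P[_ _ y0]; apply/idP/idP; lia.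
Qed.

Lemma size_heads h m : size (heads h m) = h - hook m - 1.
Proof. exact: size_iota. Qed.

Lemma fixpoint_free_hook_rec n h : 0 < h <= n ->
  \sum_(s <- partitions n | fixpoint_free s && (hook s == h)) 1 =
  \sum_(m <- partitions (n - h) | fixpoint_free m) (h - hook m - 1).
Proof.
move=> /andP[h0 hn].
pose Y := [seq (m, x) | m <- [seq m <- partitions (n - h) | fixpoint_free m], x <- heads h m].
transitivity (\sum_(y <- Y) 1); last first.
  rewrite sum1_size size_allpairs_dep sumnE big_map big_filter.
  by apply: eq_bigr => m _; rewrite size_heads.
apply: (big_bij_seq (fun s => (peel s, head 0 s))
                   (fun y => add_hook y.2 y.1 (h - y.2 - size y.1))).
- exact: partitions_uniq.
- apply: allpairs_uniq_dep => [||[m x] [m' x'] _ _ [-> ->]] //.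
    exact/filter_uniq/partitions_uniq.
  by move=> m _; exact: iota_uniq.
- move=> s; rewrite mem_partitions => /andP[ps /eqP sn] /andP[fs /eqP hs].
  have [|x [m [k [pm mx es]]]] := hook_decomposition ps.
    by apply/eqP => s0; move: h0; rewrite -hs s0.
  move: fs hs sn; rewrite /psize es fixpoint_free_add_hook hook_add_hook sumn_add_hook.
  move=> /andP[x1 fm] hs sn; rewrite peel_add_hook //=.
  split=> //; last (congr add_hook; lia).
  apply/allpairsPdep; exists m, x; rewrite mem_filter fm mem_partitions pm mem_heads //.
  by rewrite mx /psize; split=> //; apply/and3P; split; lia.
- move=> _ /allpairsPdep[m [x [+ + ->]]] _ /=.
  rewrite mem_filter mem_partitions => /andP[fm /andP[pm /eqP sm]].
  rewrite mem_heads // => /and3P[x1 mx xh].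
  rewrite mem_partitions add_hook_partition // mx /psize sumn_add_hook.
  rewrite fixpoint_free_add_hook fm hook_add_hook peel_add_hook //=.
  rewrite (gtn_eqF x1); rewrite /psize in sm; split=> //; apply/eqP; lia.
Qed.

(** * Deleting the largest part of an RR_2 partition *)

Lemma RR2_cons x t : RR2 (x :: t) = RR2 t && (head 0 t + 2 <= x).
Proof.
case: t => [|y t]; rewrite /RR2 /=; first by rewrite !andbT add0n.
by case: (leqP (y + 2) x) => yx; rewrite ?andbF //= andbT (leq_trans _ yx) ?andbT // addn2.
Qed.

Lemma omega22_cons x t : omega22 (x :: t) = (x - head 0 t - 1) * omega22 t.
Proof. by case: t => [|y t] /=; rewrite ?subn0 ?muln1. Qed.

Lemma RR2_partition s : RR2 s -> is_partition s.
Proof.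
case/andP=> ss s1; apply/andP; split; first by apply: sub_sorted ss => x y /=; lia.
by apply: sub_all s1 => x /ltnW.
Qed.

Lemma RR2_head_rec n h : 0 < h <= n ->
  \sum_(s <- partitions n | RR2 s && (head 0 s == h)) omega22 s =
  \sum_(t <- partitions (n - h) | RR2 t) (h - head 0 t - 1) * omega22 t.
Proof.
move=> /andP[h0 hn].
transitivity (\sum_(t <- partitions (n - h) | RR2 t && (head 0 t + 2 <= h))
                (h - head 0 t - 1) * omega22 t).
  apply: (big_bij_seq behead (cons h)); rewrite ?partitions_uniq //.
    move=> [|x t]; rewrite mem_partitions => /andP[ps /eqP sn] /andP[Rs /eqP hs].
      by move: hs h0 => <-.
    move: Rs ps sn; rewrite /= in hs; rewrite hs RR2_cons omega22_cons => /andP[Rt ht].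
    rewrite is_partition_cons /psize /= mem_partitions => /and3P[_ pt _] sn.
    by rewrite pt Rt ht /psize; split=> //; apply/eqP; lia.
  move=> t; rewrite mem_partitions => /andP[pt /eqP st] Rht.
  have Rs : RR2 (h :: t) by rewrite RR2_cons.
  rewrite mem_partitions RR2_partition // Rs eqxx /psize /=.
  by rewrite /psize in st; split=> //; apply/eqP; lia.
rewrite big_mkcondr; apply: eq_bigr => t _; case: leqP => // ht.
by rewrite (_ : h - head 0 t - 1 = 0) //; lia.
Qed.

(** * The common recursion *)

Definition omega_recurrence (X : nat -> nat -> nat) := forall n h,
  X n h = if n == 0 then (h == 0 : nat)
          else if 0 < h <= n then \sum_(k < (n - h).+1) (h - k - 1) * X (n - h) k
          else 0.

Lemma omega_recurrence_unique X Y :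
  omega_recurrence X -> omega_recurrence Y -> forall n h, X n h = Y n h.
Proof.
move=> eX eY; elim/ltn_ind=> n IH h; rewrite eX eY.
case: eqP => // /eqP n0; case: ifP => // /andP[h0 hn].
by apply: eq_bigr => k _; rewrite IH //; lia.
Qed.

Lemma fiber_sums_recurrence (P : pred (seq nat)) (F f : seq nat -> nat) :
    (forall n h, 0 < h <= n ->
       \sum_(s <- partitions n | P s && (f s == h)) F s =
       \sum_(t <- partitions (n - h) | P t) (h - f t - 1) * F t) ->
    P [::] -> F [::] = 1 ->
    (forall s, is_partition s -> f s <= sumn s) ->
    (forall s, is_partition s -> s != [::] -> 0 < f s) ->
  omega_recurrence (fun n h => \sum_(s <- partitions n | P s && (f s == h)) F s).
Proof.
move=> rec P0 F0 f_le f_gt0 n h.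
have f0 : f [::] = 0 by apply/eqP; rewrite -leqn0 (f_le [::]).
case: eqP => [->|/eqP n0].
  by rewrite partitions0 big_cons big_nil P0 f0 F0 eq_sym; case: eqP.
case: ifP => [hn|/negbT hn].
  rewrite rec // (big_fibers f (n - h).+1) => [|t].
    apply: eq_bigr => k _; rewrite big_distrr; apply: eq_bigr => t /andP[_ /eqP ->] //.
  by rewrite mem_partitions => /andP[pt /eqP <-] _; rewrite ltnS f_le.
rewrite big1_seq // => s /andP[/andP[_ /eqP fs]]; rewrite mem_partitions => /andP[ps /eqP sn].
have s0 : s != [::] by apply: contra_neq n0 => s0; rewrite -sn s0.
by move: hn; rewrite -fs -sn /psize f_gt0 ?f_le.
Qed.

Lemma RR2_recurrence :
  omega_recurrence (fun n h => \sum_(s <- partitions n | RR2 s && (head 0 s == h)) omega22 s).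
Proof.
apply: (fiber_sums_recurrence RR2_head_rec) => // [s _|]; first exact: head_le_sumn.
by case=> // x t; rewrite is_partition_cons => /and3P[].
Qed.

Lemma fixpoint_free_recurrence :
  omega_recurrence (fun n h => \sum_(s <- partitions n | fixpoint_free s && (hook s == h)) 1).
Proof.
apply: (@fiber_sums_recurrence _ (fun=> 1)) => //; last first.
- by case=> // x t; rewrite is_partition_cons /hook /= => /and3P[_ _ x0] _; rewrite addnS ltn_addr.
- exact: hook_le_sumn.
by move=> n h hn; rewrite fixpoint_free_hook_rec //; under [RHS]eq_bigr do rewrite muln1.
Qed.

Theorem theorem7 (n : nat) (L : seq (seq nat)) :
  uniq L ->
  (forall s : seq nat, (s \in L) = is_partition s && (psize s == n)) ->
  (\sum_(s <- L | RR2 s) omega22 s)%N =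
  count (fun s => (0 <= crank s)%R) L.
Proof.
move=> uL memL.
have pL : perm_eq L (partitions n).
  by apply: uniq_perm; rewrite ?partitions_uniq // => s; rewrite memL mem_partitions.
rewrite (perm_big _ pL) (permP pL) count_crank_ge0 -sum1_count.
rewrite (big_fibers (head 0) n.+1) => [|s]; last first.
  by rewrite mem_partitions ltnS => /andP[_ /eqP <-] _; exact: head_le_sumn.
rewrite [RHS](big_fibers hook n.+1) => [|s]; last first.
  by rewrite mem_partitions ltnS => /andP[ps /eqP <-] _; exact: hook_le_sumn.
apply: eq_bigr => h _.
exact: omega_recurrence_unique RR2_recurrence fixpoint_free_recurrence n h.
Qed.
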